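(* For every $\rho>0$ there exists $\epsilon>0$ such that for all $x=x_0+x_1\mathbf e_1+x_2\mathbf e_2+x_3\mathbf e_3\in\mathbb H$ with $x_0^2+x_j^2<\epsilon$ for $j=1,2,3$, one has $|P_n(x)|<\rho^n$ for every $n\in\mathbb N$.
   Context: For $m\ge0$, $T^m_j=\frac{2(m-j+1)}{(m+1)(m+2)}$ ($0\le j\le m$), $c_m=\sum_{j=0}^m(-1)^jT^m_j$, and $P_m(x)=\frac1{c_m}\sum_{j=0}^mT^m_jx^{m-j}\overline{x}^{\,j}$, where $\overline{x}=x_0-x_1\mathbf e_1-x_2\mathbf e_2-x_3\mathbf e_3$ is the quaternionic conjugate. *)

From HB Require Import structures.
From mathcomp Require Import all_boot all_order all_algebra.
From mathcomp Require Import reals.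
Set Implicit Arguments. Unset Strict Implicit. Unset Printing Implicit Defensive.
Import Order.TTheory GRing.Theory Num.Theory.
Local Open Scope ring_scope.

Section Quat.
Variable R : realType.

Record quat := Quat { q0 : R; q1 : R; q2 : R; q3 : R }.

Definition qadd (x y : quat) : quat :=
  Quat (q0 x + q0 y) (q1 x + q1 y) (q2 x + q2 y) (q3 x + q3 y).

Definition qscale (a : R) (x : quat) : quat :=
  Quat (a * q0 x) (a * q1 x) (a * q2 x) (a * q3 x).

(* Hamilton product: e1^2 = e2^2 = e3^2 = -1, e1 e2 = e3, e2 e3 = e1, e3 e1 = e2 *)
Definition qmul (x y : quat) : quat :=
  Quat (q0 x * q0 y - q1 x * q1 y - q2 x * q2 y - q3 x * q3 y)
       (q0 x * q1 y + q1 x * q0 y + q2 x * q3 y - q3 x * q2 y)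
       (q0 x * q2 y - q1 x * q3 y + q2 x * q0 y + q3 x * q1 y)
       (q0 x * q3 y + q1 x * q2 y - q2 x * q1 y + q3 x * q0 y).

Definition qone : quat := Quat 1 0 0 0.
Definition qzero : quat := Quat 0 0 0 0.

Fixpoint qpow (x : quat) (n : nat) : quat :=
  match n with 0%N => qone | n'.+1 => qmul x (qpow x n') end.

Definition qconj (x : quat) : quat := Quat (q0 x) (- q1 x) (- q2 x) (- q3 x).

Definition qnorm (x : quat) : R :=
  Num.sqrt (q0 x ^+ 2 + q1 x ^+ 2 + q2 x ^+ 2 + q3 x ^+ 2).

Definition Tcoef (m j : nat) : R :=
  (2 * (m - j + 1)%N)%:R / ((m + 1) * (m + 2))%N%:R.

Definition ccoef (m : nat) : R := \sum_(j < m.+1) (-1) ^+ j * Tcoef m j.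

Definition Ppoly (m : nat) (x : quat) : quat :=
  qscale (ccoef m)^-1
    (\big[qadd/qzero]_(j < m.+1)
        qscale (Tcoef m j) (qmul (qpow x (m - j)) (qpow (qconj x) j))).

End Quat.

From HB Require Import structures.
From mathcomp Require Import all_boot all_order all_algebra.
From mathcomp Require Import reals.
From mathcomp Require Import ring lra zify.
Set Implicit Arguments. Unset Strict Implicit. Unset Printing Implicit Defensive.
Import Order.TTheory GRing.Theory Num.Theory.
Local Open Scope ring_scope.

(* The Euclidean norm on quaternions is multiplicative,
   invariant under conjugation and subadditive, and the weights T^m_j lie in
   [0,1].  Moreover c_m has the closed form
     c_m (m+1)(m+2) = m + 2 - [m odd],
   so c_m > 0 and 1/c_m <= m+2.  Estimating P_n(x) term by term therefore gives
     |P_n(x)| <= (n+1)(n+2) |x|^n <= (6 |x|)^n        (n >= 1).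
   Finally, adding the three hypotheses x_0^2 + x_j^2 < eps yields
   |x|^2 < 3 eps, so eps = rho^2/108 forces |x| < rho/6 and |P_n(x)| < rho^n. *)

Section QuaternionNorm.
Variable R : realType.
Implicit Types x y : quat R.

Definition qnorm2 x : R := q0 x ^+ 2 + q1 x ^+ 2 + q2 x ^+ 2 + q3 x ^+ 2.

Lemma qnorm2_ge0 x : 0 <= qnorm2 x.
Proof. by rewrite /qnorm2 !addr_ge0 ?sqr_ge0. Qed.

Lemma qnorm_ge0 x : 0 <= qnorm x.
Proof. exact: sqrtr_ge0. Qed.

Lemma qnorm_sqr x : qnorm x ^+ 2 = qnorm2 x.
Proof. by rewrite /qnorm sqr_sqrtr // qnorm2_ge0. Qed.

(* Euler's four-square identity: the norm is multiplicative. *)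
Lemma qnorm_mul x y : qnorm (qmul x y) = qnorm x * qnorm y.
Proof.
rewrite /qnorm -sqrtrM; last exact: (qnorm2_ge0 x).
by congr Num.sqrt; case: x => a b c d; case: y => e f g h /=; ring.
Qed.

Lemma qnorm_conj x : qnorm (qconj x) = qnorm x.
Proof. by rewrite /qnorm /= !sqrrN. Qed.

Lemma qnorm_one : qnorm (qone R) = 1.
Proof. by rewrite /qnorm /= expr1n !expr0n /= !addr0 sqrtr1. Qed.

Lemma qnorm_zero : qnorm (qzero R) = 0.
Proof. by rewrite /qnorm /= !expr0n /= !addr0 sqrtr0. Qed.

Lemma qnorm_pow x n : qnorm (qpow x n) = qnorm x ^+ n.
Proof.
elim: n => [|n IHn] /=; first by rewrite qnorm_one.
by rewrite qnorm_mul IHn exprS.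
Qed.

Lemma qnorm_scale a x : qnorm (qscale a x) = `|a| * qnorm x.
Proof.
rewrite /qnorm -sqrtr_sqr -sqrtrM ?sqr_ge0 //.
by congr Num.sqrt; rewrite /=; ring.
Qed.

Definition qdot x y : R :=
  q0 x * q0 y + q1 x * q1 y + q2 x * q2 y + q3 x * q3 y.

(* Cauchy-Schwarz, via Lagrange's identity. *)
Lemma qdot_le x y : qdot x y <= qnorm x * qnorm y.
Proof.
have nxy_ge0 : 0 <= qnorm x * qnorm y by rewrite mulr_ge0 ?qnorm_ge0.
have [dot_le0|dot_gt0] := lerP (qdot x y) 0; first exact: le_trans nxy_ge0.
rewrite -(ler_pXn2r (n := 2)) ?nnegrE ?(ltW dot_gt0) // exprMn !qnorm_sqr -subr_ge0.
have -> : qnorm2 x * qnorm2 y - qdot x y ^+ 2 =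
    (q0 x * q1 y - q1 x * q0 y) ^+ 2 + (q0 x * q2 y - q2 x * q0 y) ^+ 2
  + (q0 x * q3 y - q3 x * q0 y) ^+ 2 + (q1 x * q2 y - q2 x * q1 y) ^+ 2
  + (q1 x * q3 y - q3 x * q1 y) ^+ 2 + (q2 x * q3 y - q3 x * q2 y) ^+ 2.
  by rewrite /qnorm2 /qdot; ring.
by rewrite !addr_ge0 ?sqr_ge0.
Qed.

Lemma qnorm_add x y : qnorm (qadd x y) <= qnorm x + qnorm y.
Proof.
rewrite -(ler_pXn2r (n := 2)) ?nnegrE ?addr_ge0 ?qnorm_ge0 //.
have -> : qnorm (qadd x y) ^+ 2 = qnorm2 x + qnorm2 y + 2 * qdot x y.
  by rewrite qnorm_sqr /qnorm2 /qdot /=; ring.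
rewrite sqrrD !qnorm_sqr -mulr_natr.
have := qdot_le x y; lra.
Qed.

Lemma qnorm_big m (F : 'I_m -> quat R) :
  qnorm (\big[@qadd R/qzero R]_(j < m) F j) <= \sum_(j < m) qnorm (F j).
Proof.
apply: (big_rec2 (fun a b => qnorm a <= b)); first by rewrite qnorm_zero.
by move=> i a b _ le_ab; apply: le_trans (qnorm_add _ _) _; rewrite lerD2l.
Qed.

Lemma qnorm2_lt_pairs x eps :
  q0 x ^+ 2 + q1 x ^+ 2 < eps ->
  q0 x ^+ 2 + q2 x ^+ 2 < eps ->
  q0 x ^+ 2 + q3 x ^+ 2 < eps -> qnorm2 x < 3 * eps.
Proof. by rewrite /qnorm2; have := sqr_ge0 (q0 x); lra. Qed.

End QuaternionNorm.

Section Coefficients.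
Variable R : realType.

(* The alternating sum sum_j (-1)^j (m-j+1); clearing denominators,
   c_m (m+1)(m+2) = 2 altsum m, and altsum has an explicit closed form. *)
Definition altsum (m : nat) : R := \sum_(j < m.+1) (-1) ^+ j * (m - j + 1)%:R.

Lemma altsumS m : altsum m.+1 = m.+2%:R - altsum m.
Proof.
rewrite /altsum big_ord_recl /= expr0 mul1r subn0 addn1; congr (_ + _).
rewrite -sumrN; apply: eq_bigr => j _.
by rewrite /bump /= add1n subSS exprS mulN1r mulNr.
Qed.

Lemma altsumE m : 2 * altsum m = m.+2%:R - (odd m)%:R.
Proof.
elim: m => [|m IHm].
  by rewrite /altsum big_ord1 expr0 mul1r subnn add0n mulr1 subr0.
rewrite altsumS mulrBr IHm oddS; case: (odd m); rewrite -!natr1 ?mulr0n /=; lra.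
Qed.

Lemma ccoefE m : ccoef R m = 2 * altsum m / ((m + 1) * (m + 2))%N%:R.
Proof.
rewrite /ccoef /altsum mulr_sumr mulr_suml; apply: eq_bigr => j _.
by rewrite /Tcoef natrM; ring.
Qed.

Lemma ccoef_gt0 m : 0 < ccoef R m.
Proof.
rewrite ccoefE altsumE divr_gt0 ?ltr0n ?muln_gt0 ?addn_gt0 ?orbT //.
by case: (odd m); rewrite ?subr0 ?ltr0n // -natrB // ltr0n.
Qed.

Lemma ccoef_inv_le m : (ccoef R m)^-1 <= (m + 2)%:R.
Proof.
have m2_gt0 : 0 < (m + 2)%:R :> R by rewrite ltr0n addn_gt0 orbT.
rewrite invf_ple ?posrE ?ccoef_gt0 // -[_^-1]mul1r ler_pdivrMr //.
rewrite ccoefE altsumE natrM !natrD -addn2 natrD.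
set k : R := m%:R; have k_ge0 : 0 <= k by [].
have -> : (k + 2 - (odd m)%:R) / ((k + 1) * (k + 2)) * (k + 2)
    = (k + 2 - (odd m)%:R) / (k + 1).
  by field; apply/andP; split; rewrite lt0r_neq0 //; lra.
rewrite ler_pdivlMr; last lra.
by case: (odd m) => /=; nra.
Qed.

Lemma Tcoef_ge0 m j : 0 <= Tcoef R m j.
Proof. by rewrite /Tcoef divr_ge0. Qed.

Lemma Tcoef_le1 m j : Tcoef R m j <= 1.
Proof.
rewrite /Tcoef ler_pdivrMr ?ltr0n ?muln_gt0 ?addn_gt0 ?orbT //.
by rewrite mul1r ler_nat; lia.
Qed.

End Coefficients.

Section PolynomialBound.
Variable R : realType.

(* Term-by-term estimate: each of the n+1 summands has norm <= |x|^n, since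
   T^n_j <= 1, and the normalising factor is at most n+2. *)
Lemma Ppoly_le n (x : quat R) :
  qnorm (Ppoly n x) <= ((n + 1) * (n + 2))%N%:R * qnorm x ^+ n.
Proof.
rewrite /Ppoly qnorm_scale gtr0_norm ?invr_gt0 ?ccoef_gt0 //.
rewrite natrM [(n + 1)%:R * _]mulrC -mulrA.
apply: ler_pM; [by rewrite invr_ge0 ltW ?ccoef_gt0 | exact: qnorm_ge0 |
                 exact: ccoef_inv_le | ].
apply: le_trans (qnorm_big _) _.
have -> : (n + 1)%:R * qnorm x ^+ n = \sum_(j < n.+1) qnorm x ^+ n.
  by rewrite sumr_const card_ord mulr_natl addn1.
apply: ler_sum => j _.
rewrite qnorm_scale qnorm_mul !qnorm_pow qnorm_conj -exprD subnK; last by rewrite -ltnS.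
by rewrite ger0_norm ?Tcoef_ge0 // ler_piMl ?exprn_ge0 ?qnorm_ge0 ?Tcoef_le1.
Qed.

Lemma poly_factor_le n : (1 <= n)%N -> ((n + 1) * (n + 2) <= 6 ^ n)%N.
Proof.
case: n => // n _; elim: n => [//|n IHn].
by rewrite expnS; nia.
Qed.

Lemma Ppoly_lt n (x : quat R) r :
  (1 <= n)%N -> qnorm x < r -> qnorm (Ppoly n x) < (6 * r) ^+ n.
Proof.
move=> n_ge1 x_lt_r.
have r_gt0 : 0 < r := le_lt_trans (qnorm_ge0 x) x_lt_r.
apply: le_lt_trans (Ppoly_le n x) _.
have pow_lt : qnorm x ^+ n < r ^+ n.
  by rewrite ltrXn2r ?qnorm_ge0 ?ltW // -lt0n.
apply: lt_le_trans (_ : ((n + 1) * (n + 2))%N%:R * r ^+ n <= _).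
  by rewrite ltr_pM2l // ltr0n muln_gt0 !addn_gt0 orbT.
rewrite exprMn ler_wpM2r ?exprn_ge0 ?(ltW r_gt0) //.
by rewrite -natrX ler_nat poly_factor_le.
Qed.

End PolynomialBound.

Theorem mainTheorem5 (R : realType) (rho : R) (hrho : 0 < rho) :
  exists eps : R, 0 < eps /\
    forall x : quat R,
      q0 x ^+ 2 + q1 x ^+ 2 < eps ->
      q0 x ^+ 2 + q2 x ^+ 2 < eps ->
      q0 x ^+ 2 + q3 x ^+ 2 < eps ->
      forall n : nat, (1 <= n)%N -> qnorm (Ppoly n x) < rho ^+ n.
Proof.
exists (rho ^+ 2 / 108); split; first by rewrite divr_gt0 // exprn_gt0.
move=> x h1 h2 h3 n n_ge1.
have x_small : qnorm x < rho / 6.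
  rewrite -(ltr_pXn2r (n := 2)) ?nnegrE ?qnorm_ge0 ?divr_ge0 ?ltW // qnorm_sqr.
  have -> : (rho / 6) ^+ 2 = 3 * (rho ^+ 2 / 108) by rewrite expr_div_n; field.
  exact: qnorm2_lt_pairs.
by have := Ppoly_lt n_ge1 x_small; rewrite mulrC divfK // pnatr_eq0.
Qed.
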